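(* Let $A$ be an orientable surface group, $p$ a prime, and $\mathcal{S}$ a directed set of normal subgroups of $p$-power index in $A$ such that $\varprojlim_{U\in\mathcal{S}}H_1(U,\mathbb{F}_p)=0$ (transition maps induced by inclusions). Then the completion $\overline{A}=\varprojlim_{U\in\mathcal{S}}A/U$ is isomorphic (via the natural epimorphism $\widehat{A}_p\to\overline{A}$) to the pro-$p$ completion $\widehat{A}_p$.
   Context: An orientable surface group is the fundamental group of a closed orientable surface of genus $\ge1$. A set of subgroups is directed if any two contain a common member. *)

From mathcomp Require Import all_boot.
Set Implicit Arguments. Unset Strict Implicit. Unset Printing Implicit Defensive.

Record group := Group {
  carrier :> Type;
  gmul : carrier -> carrier -> carrier;
  gone : carrier;
  ginv : carrier -> carrier;
  gmulA : forall x y z, gmul x (gmul y z) = gmul (gmul x y) z;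
  gmul1 : forall x, gmul gone x = x;
  gmulV : forall x, gmul (ginv x) x = gone }.

Section Groups.
Variable G : group.
Local Notation "x * y" := (gmul x y).

Definition gpow (x : G) (n : nat) : G := iter n (fun y => y * x) (gone G).
Definition gcomm (x y : G) : G := ginv x * ginv y * x * y.

Definition is_subgroup (H : G -> Prop) : Prop :=
  H (gone G) /\ (forall x y, H x -> H y -> H (x * y)) /\ (forall x, H x -> H (ginv x)).

Definition is_normal (H : G -> Prop) : Prop :=
  is_subgroup H /\ forall g x, H x -> H (ginv g * x * g).

Definition subset (V U : G -> Prop) : Prop := forall x, V x -> U x.

Definition gen (X : G -> Prop) (x : G) : Prop :=
  forall H, is_subgroup H -> subset X H -> H x.

(* Phi_p(U) = U^p [U,U]; H_1(U, F_p) = U / Phi_p(U) *)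
Definition PhiP (p : nat) (U : G -> Prop) : G -> Prop :=
  gen (fun y => (exists u, U u /\ y = gpow u p) \/
                (exists u v, U u /\ U v /\ y = gcomm u v)).

(* U has index p^k for some k: a complete irredundant system of p^k coset reps *)
Definition p_power_index (p : nat) (U : G -> Prop) : Prop :=
  exists k, exists r : 'I_(p ^ k) -> G,
    forall x, exists! i, U (x * ginv (r i)).

Definition NSp (p : nat) (U : G -> Prop) : Prop := is_normal U /\ p_power_index p U.

Definition directed (S : (G -> Prop) -> Prop) : Prop :=
  forall U V, S U -> S V -> exists W, S W /\ subset W U /\ subset W V.

(* Elements of lim_{U in C} G/U: families c with c V = c U mod U whenever V <= U
   (represented by a total function on subgroups; only values on C matter). *)
Definition compatible (C : (G -> Prop) -> Prop) (c : (G -> Prop) -> G) : Prop :=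
  forall U V, C U -> C V -> subset V U -> U (c V * ginv (c U)).

(* Two such families define the same element of the inverse limit. *)
Definition fam_eq (C : (G -> Prop) -> Prop) (c c' : (G -> Prop) -> G) : Prop :=
  forall U, C U -> U (c U * ginv (c' U)).

(* lim_{U in S} H_1(U, F_p) = 0, transition maps H_1(V) -> H_1(U) induced by V <= U:
   every compatible family of classes u_U in U/Phi_p(U) is zero. *)
Definition lim_H1_zero (p : nat) (S : (G -> Prop) -> Prop) : Prop :=
  forall c : (G -> Prop) -> G,
    (forall U, S U -> U (c U)) ->
    (forall U V, S U -> S V -> subset V U -> PhiP p U (c V * ginv (c U))) ->
    forall U, S U -> PhiP p U (c U).

(* The natural map hat A_p -> lim_{U in S} A/U (restriction of families)
   is a bijection (it is automatically a continuous group homomorphism). *)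
Definition restriction_bijective (p : nat) (S : (G -> Prop) -> Prop) : Prop :=
  (forall g g', compatible (NSp p) g -> compatible (NSp p) g' ->
     fam_eq S g g' -> fam_eq (NSp p) g g') /\
  (forall c, compatible S c -> exists g, compatible (NSp p) g /\ fam_eq S g c).

End Groups.

Definition is_hom (G H : group) (f : G -> H) : Prop :=
  forall x y, f (gmul x y) = gmul (f x) (f y).

Definition surface_rel (G : group) (g : nat) (a b : nat -> G) : G :=
  foldr (fun i acc => gmul (gcomm (a i) (b i)) acc) (gone G) (iota 0 g).

(* A is the orientable surface group of genus g >= 1:
   A = < a_1,b_1,...,a_g,b_g | prod [a_i,b_i] = 1 > via the universal property. *)
Definition orientable_surface_group (A : group) : Prop :=
  exists g, 1 <= g /\ exists a b : nat -> A,
    surface_rel g a b = gone A /\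
    forall (H : group) (a' b' : nat -> H), surface_rel g a' b' = gone H ->
      (exists f : A -> H, is_hom f /\ forall i, i < g -> f (a i) = a' i /\ f (b i) = b' i) /\
      (forall f1 f2 : A -> H, is_hom f1 -> is_hom f2 ->
         (forall i, i < g -> f1 (a i) = f2 (a i) /\ f1 (b i) = f2 (b i)) ->
         forall x, f1 x = f2 x).

(* Only the finite generation of the surface group matters, and the statement
   amounts to [S] being cofinal among the normal subgroups of p-power index.
   Suppose [N] is such a subgroup containing no member of [S].  Then [A] acts on
   the p^k cosets of [N] through a finite p-group; pick [U0] in [S] with minimal
   image and let [H] be the group generated by that image.  Every [V] in [S] below
   [U0] has the same image, so [V] is not contained in the preimage [P] of the
   Frattini subgroup of [H], although [P] contains Phi_p(U0) = U0^p [U0,U0].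
   A finitely generated group has countably many subgroups of finite index, so [S]
   has a cofinal descending chain starting at [U0], and by Schreier each member [U]
   of the chain is finitely generated, whence [U / Phi_p(U)] is finite.  A
   Mittag-Leffler argument lifts an element of the chain lying outside [P] to a
   compatible family in lim H_1(U, F_p) that is nonzero at [U0]. *)

From Pilot Require Import Defs.
From mathcomp Require Import all_boot boolp.
From mathcomp Require all_fingroup all_solvable.

Set Implicit Arguments. Unset Strict Implicit. Unset Printing Implicit Defensive.

Declare Scope grp_scope.
Delimit Scope grp_scope with grp.
Notation "x * y" := (gmul x y) : grp_scope.
Notation "x ^-1" := (ginv x) : grp_scope.
Local Open Scope grp_scope.

Section GroupFacts.
Variable G : group.
Implicit Types (x y z : G) (H U V X : G -> Prop).

Lemma gmulgV x : x * x^-1 = gone G.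
Proof.
have e : x^-1^-1 * x^-1 = gone G by apply: gmulV.
by rewrite -[x * x^-1]gmul1 -{1}e -gmulA (gmulA x^-1) gmulV gmul1.
Qed.

Lemma gmulg1 x : x * gone G = x.
Proof. by rewrite -(gmulV x) gmulA gmulgV gmul1. Qed.

Lemma gmulKg x y : x^-1 * (x * y) = y.
Proof. by rewrite gmulA gmulV gmul1. Qed.

Lemma gmulgK x y : x * y * y^-1 = x.
Proof. by rewrite -gmulA gmulgV gmulg1. Qed.

Lemma gmulgKV x y : x * y^-1 * y = x.
Proof. by rewrite -gmulA gmulV gmulg1. Qed.

Lemma gmulI x : injective (gmul x).
Proof. by move=> y z e; rewrite -(gmulKg x y) e gmulKg. Qed.

Lemma ginvK x : x^-1^-1 = x.
Proof. by apply: (@gmulI x^-1); rewrite gmulgV gmulV. Qed.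

Lemma ginvM x y : (x * y)^-1 = y^-1 * x^-1.
Proof. by apply: (@gmulI (x * y)); rewrite gmulgV -gmulA (gmulA y) gmulgV gmul1 gmulgV. Qed.

Lemma ginv1 : (gone G)^-1 = gone G.
Proof. by rewrite -{2}(gmulV (gone G)) gmulg1. Qed.

Lemma gpowS x n : gpow x n.+1 = gpow x n * x.
Proof. by []. Qed.

Lemma gpowD x m n : gpow x (m + n) = gpow x m * gpow x n.
Proof. by elim: n => [|n IH]; rewrite ?addn0 ?gmulg1 // addnS !gpowS IH gmulA. Qed.

Section Subgroup.
Variable H : G -> Prop.
Hypothesis sH : is_subgroup H.

Lemma subgroup1 : H (gone G).
Proof. by case: sH. Qed.

Lemma subgroupM x y : H x -> H y -> H (x * y).
Proof. by case: sH => _ []; auto. Qed.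

Lemma subgroupV x : H x -> H x^-1.
Proof. by case: sH => _ []; auto. Qed.

Lemma subgroupMV x y : H x -> H y -> H (x * y^-1).
Proof. by move=> hx /subgroupV; apply: subgroupM. Qed.

Lemma subgroup_gpow x n : H x -> H (gpow x n).
Proof. by move=> hx; elim: n => [|n IH]; [exact: subgroup1 | exact: subgroupM]. Qed.

Lemma coset_refl x : H (x * x^-1).
Proof. by rewrite gmulgV; apply: subgroup1. Qed.

Lemma coset_sym x y : H (x * y^-1) -> H (y * x^-1).
Proof. by move/subgroupV; rewrite ginvM ginvK. Qed.

Lemma coset_trans x y z : H (x * y^-1) -> H (y * z^-1) -> H (x * z^-1).
Proof. by move=> hxy hyz; have := subgroupM hxy hyz; rewrite -gmulA gmulKg. Qed.

End Subgroup.

Lemma gen_is_subgroup X : is_subgroup (gen X).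
Proof.
split; first by move=> H [].
split=> [x y hx hy H sH sXH | x hx H sH sXH].
  by apply: (subgroupM sH); [apply: hx | apply: hy].
by apply: (subgroupV sH); apply: hx.
Qed.

Lemma gen_mem X x : X x -> gen X x.
Proof. by move=> hx H _; apply. Qed.

Lemma gen_min X H : is_subgroup H -> Defs.subset X H -> Defs.subset (gen X) H.
Proof. by move=> sH sXH x; apply. Qed.

Lemma gen_mono X Y : Defs.subset X Y -> Defs.subset (gen X) (gen Y).
Proof. by move=> sXY; apply: gen_min (gen_is_subgroup Y) _ => x /sXY /gen_mem. Qed.

Inductive word X : G -> Prop :=
  | word1 : word X (gone G)
  | wordM x y : word X x -> X y -> word X (x * y)
  | wordMV x y : word X x -> X y -> word X (x * y^-1).

Lemma word_gen X y : X y -> word X y.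
Proof. by move=> Xy; have := wordM (@word1 X) Xy; rewrite gmul1. Qed.

Lemma word_is_subgroup X : is_subgroup (word X).
Proof.
have word_mul x y : word X x -> word X y -> word X (x * y).
  move=> hx; elim=> [|u v _ IH Xv|u v _ IH Xv]; first by rewrite gmulg1.
    by rewrite gmulA; apply: wordM.
  by rewrite gmulA; apply: wordMV.
split; [exact: word1 | split=> // x]; elim=> [|y z _ IH Xz|y z _ IH Xz].
- by rewrite ginv1; apply: word1.
- by rewrite ginvM; apply: word_mul IH; have := wordMV (@word1 X) Xz; rewrite gmul1.
- by rewrite ginvM ginvK; apply: word_mul IH; apply: word_gen.
Qed.

Lemma gen_ind X (P : G -> Prop) :
  P (gone G) -> (forall x y, P x -> X y -> P (x * y)) ->
  (forall x y, P x -> X y -> P (x * y^-1)) -> forall x, gen X x -> P x.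
Proof.
move=> P1 PM PMV x /(_ _ (word_is_subgroup X) (@word_gen X)).
by elim=> *; auto.
Qed.

Definition conj g x := g^-1 * x * g.

Lemma conjM g x y : conj g (x * y) = conj g x * conj g y.
Proof. by rewrite /conj !gmulA gmulgK. Qed.

Lemma conjV g x : conj g x^-1 = (conj g x)^-1.
Proof. by rewrite /conj !ginvM ginvK gmulA. Qed.

Lemma conj1 g : conj g (gone G) = gone G.
Proof. by rewrite /conj gmulg1 gmulV. Qed.

Lemma conj_gpow g x n : conj g (gpow x n) = gpow (conj g x) n.
Proof. by elim: n => [|n IH]; rewrite ?conj1 // !gpowS conjM IH. Qed.

Lemma conj_gcomm g x y : conj g (gcomm x y) = gcomm (conj g x) (conj g y).
Proof. by rewrite /gcomm !conjM !conjV. Qed.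

Lemma normal_conj H g x : is_normal H -> H x -> H (conj g x).
Proof. by case=> _; apply. Qed.

Lemma gen_conj_closed X :
  (forall g x, X x -> X (conj g x)) -> forall g x, gen X x -> gen X (conj g x).
Proof.
move=> hX g; apply: (@gen_min X (fun y => gen X (conj g y))); last by move=> y /(hX g) /gen_mem.
have sX := gen_is_subgroup X.
split; first by rewrite /= conj1; apply: subgroup1 sX.
split=> [y z hy hz | y hy] /=; first by rewrite conjM; exact: (subgroupM sX hy hz).
by rewrite conjV; exact: (subgroupV sX hy).
Qed.

Section Frattini.
Variable p : nat.

Lemma PhiP_mono U V : Defs.subset V U -> Defs.subset (PhiP p V) (PhiP p U).
Proof.
move=> sVU; apply: gen_mono => y [[u [hu ->]] | [u [v [hu [hv ->]]]]].
  by left; exists u; split => //; apply: sVU.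
by right; exists u, v; split; [apply: sVU | split => //; apply: sVU].
Qed.

Lemma PhiP_normal U : is_normal U -> is_normal (PhiP p U).
Proof.
move=> nU; split; first exact: gen_is_subgroup.
apply: gen_conj_closed => g y [[u [hu ->]] | [u [v [hu [hv ->]]]]].
  by left; exists (conj g u); rewrite conj_gpow; split => //; apply: normal_conj.
right; exists (conj g u), (conj g v); rewrite conj_gcomm.
by split; [|split] => //; apply: normal_conj.
Qed.

Lemma PhiP_gpow U u : U u -> PhiP p U (gpow u p).
Proof. by move=> hu; apply: gen_mem; left; exists u. Qed.

Lemma PhiP_gcomm U u v : U u -> U v -> PhiP p U (gcomm u v).
Proof. by move=> hu hv; apply: gen_mem; right; exists u, v. Qed.

End Frattini.
End GroupFacts.

Lemma ex_minimizer (X : Type) (f : X -> nat) (P : X -> Prop) :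
  (exists x, P x) -> exists x, P x /\ forall y, P y -> f x <= f y.
Proof.
case=> x0 Px0; have hn : exists n, `[< exists x, P x /\ f x = n >].
  by exists (f x0); apply/asboolP; exists x0.
case: (ex_minnP hn) => _ /asboolP [x [Px <-]] minx.
by exists x; split => // y Py; apply: minx; apply/asboolP; exists y.
Qed.

Lemma dependent_choice_nat (T : Type) (R : nat -> T -> Prop) (Q : nat -> T -> T -> Prop) x0 :
  R 0 x0 -> (forall n x, R n x -> exists y, R n.+1 y /\ Q n x y) ->
  exists c : nat -> T, c 0 = x0 /\ forall n, R n (c n) /\ Q n (c n) (c n.+1).
Proof.
move=> R0 step.
have step' n x : exists y, R n x -> R n.+1 y /\ Q n x y.
  by case: (pselect (R n x)) => [/step [y hy] | nR]; [exists y | exists x].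
pose next n x := sval (cid (step' n x)).
pose fix c n := if n is n'.+1 then next n' (c n') else x0.
have Rc n : R n (c n) by elim: n => //= n IH; exact: (svalP (cid (step' n (c n))) IH).1.
by exists c; split => // n; split => //; exact: (svalP (cid (step' n (c n))) (Rc n)).2.
Qed.

Lemma finset_chain_stabilizes (T : finType) (d : nat -> {set T}) n0 :
  (forall m, d m.+1 \subset d m) -> exists M, n0 <= M /\ forall m, M <= m -> d M \subset d m.
Proof.
move=> d_decr.
have [M [n0M minM]] := ex_minimizer (fun M => #|d M|) (ex_intro (leq n0) n0 (leqnn n0)).
exists M; split => // m Mm.
have sub : d m \subset d M.
  by move: Mm => /subnK <-; elim: (m - M) => // k IH; rewrite addSn (subset_trans (d_decr _) IH).
by have /eqP -> : d m == d M by rewrite eqEcard sub minM // (leq_trans n0M Mm).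
Qed.

Section FiniteFrattiniQuotient.
Variables (G : group) (p : nat) (U : G -> Prop) (F : finType) (t : F -> G).
Hypotheses (p_gt0 : 0 < p) (nU : is_normal U) (tU : forall f, U (t f)).
Hypothesis genU : forall u, U u -> gen (fun x => exists f, x = t f) u.

Let sU : is_subgroup U := proj1 nU.
Let sPhi : is_subgroup (PhiP p U) := proj1 (PhiP_normal p nU).
Local Notation eqv x y := (PhiP p U (x * y^-1)).

Lemma eqv_mul x y x' y' : eqv x x' -> eqv y y' -> eqv (x * y) (x' * y').
Proof.
move=> hx hy; apply: (coset_trans sPhi (y := x * y')).
  have := normal_conj (x^-1) (PhiP_normal p nU) hy.
  by rewrite /conj ginvM ginvK !gmulA.
by rewrite ginvM gmulA gmulgK.
Qed.

Lemma eqv_commute x y : U x -> U y -> eqv (x * y) (y * x).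
Proof.
move=> hx hy; have := PhiP_gcomm (p:=p) (subgroupV sU hx) (subgroupV sU hy).
by rewrite /gcomm !ginvK ginvM !gmulA.
Qed.

Lemma eqv_gpow_modp x m : U x -> eqv (gpow x m) (gpow x (m %% p)).
Proof.
move=> hx; rewrite {1}(divn_eq m p) gpowD gmulgK.
elim: (m %/ p) => [|q IH]; first exact: subgroup1 sPhi.
by rewrite mulSn addnC gpowD; exact: (subgroupM sPhi IH (PhiP_gpow hx)).
Qed.

Definition tprod (e : F -> nat) (s : seq F) : G :=
  foldr (fun f acc => gpow (t f) (e f) * acc) (gone G) s.

Lemma tprod_in e s : U (tprod e s).
Proof.
elim: s => [|f s IH] /=; first exact: subgroup1 sU.
exact: (subgroupM sU (subgroup_gpow sU _ (tU f)) IH).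
Qed.

Lemma eq_tprod e e' s : {in s, e =1 e'} -> tprod e s = tprod e' s.
Proof.
elim: s => [|f s IH] //= ee'; rewrite ee' ?mem_head // IH // => x xs.
by apply: ee'; rewrite in_cons xs orbT.
Qed.

Lemma tprod_mulr e s f : uniq s -> f \in s ->
  eqv (tprod e s * t f) (tprod [eta e with f |-> (e f).+1] s).
Proof.
elim: s => [|f' s IH] //= /andP [f's us]; rewrite in_cons eq_sym.
have [<- _ | nff' fs] /= := eqVneq f' f.
  rewrite (@eq_tprod _ e) => [|x xs /=]; last by case: eqP => // ex; rewrite -ex xs in f's.
  have := eqv_mul (coset_refl sPhi (gpow (t f') (e f'))) (eqv_commute (tprod_in e s) (tU f')).
  by rewrite !gmulA; apply.
have := eqv_mul (coset_refl sPhi (gpow (t f') (e f'))) (IH us fs).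
by rewrite !gmulA; apply.
Qed.

Lemma eqv_tprod u : U u -> exists e, eqv u (tprod e (enum F)).
Proof.
have mulr x f : (exists e, eqv x (tprod e (enum F))) -> exists e, eqv (x * t f) (tprod e (enum F)).
  case=> e he; exists [eta e with f |-> (e f).+1].
  have fF : f \in enum F by rewrite mem_enum.
  apply: (coset_trans sPhi _ (tprod_mulr e (enum_uniq F) fF)).
  exact: (eqv_mul he (coset_refl sPhi _)).
have mulr_pow x f m : (exists e, eqv x (tprod e (enum F))) ->
    exists e, eqv (x * gpow (t f) m) (tprod e (enum F)).
  by move=> hx; elim: m => [|m IH]; rewrite ?gmulg1 // gpowS gmulA; apply: mulr.
have invE f : eqv (t f)^-1 (gpow (t f) p.-1).
  by rewrite -ginvM -gpowS prednK //; apply: (subgroupV sPhi (PhiP_gpow (tU f))).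
move=> /genU; elim/gen_ind => [|x _ hx [f ->] | x _ hx [f ->]].
- exists (fun=> 0); suff -> : tprod (fun=> 0) (enum F) = gone G by exact: (coset_refl sPhi).
  by elim: (enum F) => //= f s ->; rewrite gmul1.
- exact: mulr.
- have [e he] := mulr_pow x f p.-1 hx; exists e; apply: (coset_trans sPhi _ he).
  exact: (eqv_mul (coset_refl sPhi x) (invE f)).
Qed.

Lemma PhiP_finite_index :
  exists R : {ffun F -> 'I_p} -> G, forall u, U u -> exists j, PhiP p U (u * (R j)^-1).
Proof.
exists (fun j : {ffun F -> 'I_p} => tprod (fun f => j f) (enum F)) => u /eqv_tprod [e he].
exists [ffun f => Ordinal (ltn_pmod (e f) p_gt0)].
apply: (coset_trans sPhi he).
rewrite [X in _ * X^-1](@eq_tprod _ (fun f => e f %% p)) => [|f _]; last by rewrite ffunE.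
elim: (enum F) => [|f s IH] /=; first exact: (coset_refl sPhi).
exact: (eqv_mul (eqv_gpow_modp _ (tU f)) IH).
Qed.

End FiniteFrattiniQuotient.

Section CosetIndex.
Variables (G : group) (H : G -> Prop) (n : nat) (r : 'I_n -> G).
Hypotheses (sH : is_subgroup H) (rH : forall x, exists! i, H (x * (r i)^-1)).

Let coset_index_ex x : exists i, H (x * (r i)^-1).
Proof. by have [i []] := rH x; exists i. Qed.

Definition coset_index x : 'I_n := sval (cid (coset_index_ex x)).

Lemma coset_indexP x : H (x * (r (coset_index x))^-1).
Proof. exact: svalP (cid (coset_index_ex x)). Qed.

Lemma coset_index_uniq x i : H (x * (r i)^-1) -> coset_index x = i.
Proof. by have [j [_ uj]] := rH x => /uj <-; apply/esym/uj/coset_indexP. Qed.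

Lemma coset_index_eq x y : H (x * y^-1) -> coset_index x = coset_index y.
Proof. by move=> hxy; apply/coset_index_uniq/(coset_trans sH hxy)/coset_indexP. Qed.

Lemma coset_index_rep i : coset_index (r i) = i.
Proof. exact/coset_index_uniq/(coset_refl sH). Qed.

Lemma coset_indexMr x y : coset_index (x * y) = coset_index (r (coset_index x) * y).
Proof. by apply: coset_index_eq; rewrite ginvM gmulA gmulgK; apply: coset_indexP. Qed.

Lemma coset_index1P x : H x <-> coset_index x = coset_index (gone G).
Proof.
split=> [hx | e]; first by apply: coset_index_eq; rewrite ginv1 gmulg1.
have hx := coset_indexP x; rewrite e in hx.
by have := coset_trans sH hx (coset_sym sH (coset_indexP (gone G))); rewrite ginv1 gmulg1.
Qed.

End CosetIndex.

Section GeneratedGroup.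
Variables (G : group) (X : G -> Prop).

Definition gen_elt := {x : G | gen X x}.

Lemma gen_elt_inj (x y : gen_elt) : sval x = sval y -> x = y.
Proof. by case: x y => [x hx] [y hy] /= exy; subst y; congr exist; apply: Prop_irrelevance. Qed.

Let sX := gen_is_subgroup X.
Definition gen_elt_mul (x y : gen_elt) : gen_elt := exist _ _ (subgroupM sX (svalP x) (svalP y)).
Definition gen_elt_one : gen_elt := exist _ _ (subgroup1 sX).
Definition gen_elt_inv (x : gen_elt) : gen_elt := exist _ _ (subgroupV sX (svalP x)).

Lemma gen_elt_mulA x y z : gen_elt_mul x (gen_elt_mul y z) = gen_elt_mul (gen_elt_mul x y) z.
Proof. exact/gen_elt_inj/gmulA. Qed.

Lemma gen_elt_mul1 x : gen_elt_mul gen_elt_one x = x.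
Proof. exact/gen_elt_inj/gmul1. Qed.

Lemma gen_elt_mulV x : gen_elt_mul (gen_elt_inv x) x = gen_elt_one.
Proof. exact/gen_elt_inj/gmulV. Qed.

Definition gen_group : group :=
  @Defs.Group gen_elt gen_elt_mul gen_elt_one gen_elt_inv gen_elt_mulA gen_elt_mul1 gen_elt_mulV.

End GeneratedGroup.

Lemma surface_group_finitely_generated (A : group) : orientable_surface_group A ->
  exists (L : finType) (s : L -> A), forall x, gen (fun y => exists l, y = s l) x.
Proof.
case=> [[|g] [//= _ [a [b [rel univ]]]]].
pose s (l : 'I_g.+1 * bool) := if l.2 then b l.1 else a l.1.
exists ('I_g.+1 * bool)%type, s => x; set X := fun y => _.
pose K := gen_group X.
pose a' i : K := exist _ (a (inord i)) (gen_mem (ex_intro _ (inord i, false) erefl)).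
pose b' i : K := exist _ (b (inord i)) (gen_mem (ex_intro _ (inord i, true) erefl)).
have rel' : surface_rel g.+1 a' b' = gone K.
  apply: gen_elt_inj; rewrite [RHS]/= -rel /surface_rel.
  have : all (fun i => i < g.+1) (iota 0 g.+1) by apply/allP => i; rewrite mem_iota.
  by elim: (iota 0 g.+1) => //= i l IH /andP [ig /IH ->]; rewrite inordK.
have [[f [fM fab]] _] := univ K a' b' rel'.
have [_ uniqA] := univ A a b rel.
have -> : x = sval (f x).
  apply: (uniqA id (fun y => sval (f y))) => // [y z | i ig]; first by rewrite /= fM.
  by have [-> ->] := fab i ig; rewrite /= inordK.
exact: svalP.
Qed.

Section FinitelyGenerated.
Variables (A : group) (L : finType) (s : L -> A).
Hypothesis genA : forall x, gen (fun y => exists l, y = s l) x.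

Definition letter := (L * bool)%type.
Definition letter_val (l : letter) : A := if l.2 then (s l.1)^-1 else s l.1.
Definition word_val (w : seq letter) : A := foldl (fun x l => x * letter_val l) (gone A) w.

Lemma word_val_surj x : exists w, word_val w = x.
Proof.
elim/gen_ind: x / (genA x) => [|x _ [w <-] [l ->] | x _ [w <-] [l ->]]; first by exists [::].
  by exists (rcons w (l, false)); rewrite /word_val foldl_rcons.
by exists (rcons w (l, true)); rewrite /word_val foldl_rcons.
Qed.

Section Schreier.
Variables (H : A -> Prop) (n : nat) (r : 'I_n -> A).
Hypotheses (sH : is_subgroup H) (rH : forall x, exists! i, H (x * (r i)^-1)).
Local Notation ci := (coset_index rH).

(* [None] accounts for the representative of [H] itself, which need not be [1]. *)
Definition schreier_gen (o : option ('I_n * letter)) : A :=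
  if o is Some (i, l) then r i * letter_val l * (r (ci (r i * letter_val l)))^-1
  else (r (ci (gone A)))^-1.

Lemma schreier_gen_in o : H (schreier_gen o).
Proof.
case: o => [[i l]|] /=; first exact: (coset_indexP rH).
by have := coset_indexP rH (gone A); rewrite gmul1.
Qed.

Lemma schreier_generates u : H u -> gen (fun y => exists o, y = schreier_gen o) u.
Proof.
set T := fun y => _; have sT := gen_is_subgroup T.
have Tgen o : gen T (schreier_gen o) by apply: gen_mem; exists o.
have transversal x : gen T (x * (r (ci x))^-1).
  have step y l : gen T (y * (r (ci y))^-1) ->
      gen T (y * letter_val l * (r (ci (y * letter_val l)))^-1).
    move=> hy; rewrite (coset_indexMr sH rH).
    by have := subgroupM sT hy (Tgen (Some (ci y, l))); rewrite /= !gmulA gmulgKV.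
  elim/gen_ind: x / (genA x) => [|y _ hy [l' ->] | y _ hy [l' ->]].
  - by rewrite gmul1; apply: Tgen None.
  - exact: (step y (l', false)).
  - exact: (step y (l', true)).
move=> /(coset_index1P sH rH) hu; have := subgroupMV sT (transversal u) (Tgen None).
by rewrite hu /= ginvK gmulgKV.
Qed.

End Schreier.

Definition subgroup_of_words (ws : seq (seq letter)) : A -> Prop :=
  gen (fun x => exists2 w, w \in ws & word_val w = x).

Lemma finite_index_subgroup_of_words H n (r : 'I_n -> A) :
  is_subgroup H -> (forall x, exists! i, H (x * (r i)^-1)) ->
  exists ws, H = subgroup_of_words ws.
Proof.
move=> sH rH; pose w o := sval (cid (word_val_surj (schreier_gen rH o))).
have wP o : word_val (w o) = schreier_gen rH o := svalP (cid (word_val_surj _)).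
set ws := map w (enum {: option ('I_n * letter)}).
have ws_gen : Defs.subset (fun y => exists o, y = schreier_gen rH o) (subgroup_of_words ws).
  by move=> _ [o ->]; apply: gen_mem; exists (w o); rewrite ?wP // map_f ?mem_enum.
exists ws; apply/funext => x; apply/propext; split=> hx.
  exact: (gen_min (gen_is_subgroup _) ws_gen (schreier_generates sH hx)).
apply: (gen_min sH _ hx) => _ [_ /mapP [o _ ->] <-].
by rewrite wP; apply: schreier_gen_in.
Qed.

Definition subgroup_enum (k : nat) : A -> Prop := subgroup_of_words (odflt [::] (unpickle k)).

Lemma finite_index_subgroup_enum H n (r : 'I_n -> A) :
  is_subgroup H -> (forall x, exists! i, H (x * (r i)^-1)) -> exists k, subgroup_enum k = H.
Proof.
move=> sH /(finite_index_subgroup_of_words sH) [ws ->].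
by exists (pickle ws); rewrite /subgroup_enum pickleK.
Qed.

Lemma NSp_PhiP_finite_index p U : prime p -> NSp p U ->
  exists (F : finType) (R : F -> A), forall u, U u -> exists j, PhiP p U (u * (R j)^-1).
Proof.
move=> p_pr [nU [k [r rU]]].
have [R RP] := PhiP_finite_index (prime_gt0 p_pr) nU (schreier_gen_in rU)
  (schreier_generates (proj1 nU) (rH := rU)).
by exists {ffun option ('I_(p ^ k) * letter) -> 'I_p}, R.
Qed.

End FinitelyGenerated.

Module CosetAction.
Import all_fingroup all_solvable.

Section CosetPerm.
Variables (A : Defs.group) (N : A -> Prop) (n : nat) (r : 'I_n -> A).
Hypotheses (nN : is_normal N) (rN : forall x, exists! i, N (x * (r i)^-1)).
Let sN := proj1 nN.
Local Notation ci := (coset_index rN).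

Lemma coset_index_rep1 y : ci (r (ci (gone A)) * y) = ci y.
Proof.
apply: (coset_index_eq sN); rewrite gmulgK.
by apply/(coset_index1P sN rN); rewrite coset_index_rep.
Qed.

Lemma coset_index_mulr_inj x : injective (fun i => ci (r i * x)).
Proof.
move=> i j /= eij; rewrite -(coset_index_rep sN rN i) -(coset_index_rep sN rN j).
apply: (coset_index_eq sN); have := coset_indexP rN (r i * x); rewrite eij.
move/(coset_trans sN)/(_ (coset_sym sN (coset_indexP rN (r j * x)))).
by rewrite ginvM gmulA gmulgK.
Qed.

Definition coset_perm x : {perm 'I_n} := perm (@coset_index_mulr_inj x).

Lemma coset_permE x i : coset_perm x i = ci (r i * x).
Proof. exact: permE. Qed.

Lemma coset_permM x y : coset_perm (x * y) = (coset_perm x * coset_perm y)%g.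
Proof. by apply/permP => i; rewrite permM !coset_permE gmulA (coset_indexMr sN). Qed.

Lemma coset_perm1P x : coset_perm x = 1%g <-> N x.
Proof.
split=> [ex | Nx].
  by apply/(coset_index1P sN rN); rewrite -(coset_index_rep1 x) -coset_permE ex perm1.
apply/permP => i; rewrite coset_permE perm1 -{2}(coset_index_rep sN rN i).
by apply: (coset_index_eq sN); have := normal_conj (r i)^-1 nN Nx; rewrite /conj ginvK.
Qed.

Lemma coset_perm1 : coset_perm (gone A) = 1%g.
Proof. exact/coset_perm1P/(subgroup1 sN). Qed.

Lemma coset_permV x : coset_perm x^-1 = (coset_perm x)^-1%g.
Proof. by apply: (mulIg (coset_perm x)); rewrite -coset_permM gmulV coset_perm1 mulVg. Qed.

Lemma coset_perm_gpow x m : coset_perm (gpow x m) = (coset_perm x ^+ m)%g.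
Proof. by elim: m => [|m IH]; rewrite ?coset_perm1 // gpowS coset_permM IH expgSr. Qed.

Lemma coset_perm_gcomm x y : coset_perm (gcomm x y) = [~ coset_perm x, coset_perm y]%g.
Proof. by rewrite /gcomm !coset_permM !coset_permV /commg /conjg !mulgA. Qed.

Definition coset_perms : {set {perm 'I_n}} := [set coset_perm (r i) | i : 'I_n].

Lemma coset_perm_rep x : coset_perm x \in coset_perms.
Proof.
have /coset_perm1P := coset_indexP rN x; rewrite coset_permM coset_permV.
by move/eqP; rewrite mulg_eq1 invgK => /eqP ->; apply: imset_f.
Qed.

Lemma coset_perms_group_set : group_set coset_perms.
Proof.
apply/group_setP; split; first by rewrite -coset_perm1 coset_perm_rep.
by move=> _ _ /imsetP [i _ ->] /imsetP [j _ ->]; rewrite -coset_permM coset_perm_rep.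
Qed.

Canonical coset_perms_group := Group coset_perms_group_set.

Lemma card_coset_perms : #|coset_perms| = n.
Proof.
rewrite card_imset ?card_ord // => i j /(congr1 (fun q : {perm 'I_n} => q (ci (gone A)))).
by rewrite !coset_permE !coset_index_rep1 !(coset_index_rep sN).
Qed.

Definition coset_perm_image (U : A -> Prop) : {set {perm 'I_n}} :=
  [set q | `[< exists2 u, U u & coset_perm u = q >]].

Lemma mem_coset_perm_image (U : A -> Prop) u : U u -> coset_perm u \in coset_perm_image U.
Proof. by move=> Uu; rewrite inE; apply/asboolP; exists u. Qed.

Lemma coset_perm_imageP (U : A -> Prop) q :
  reflect (exists2 u, U u & coset_perm u = q) (q \in coset_perm_image U).
Proof. by rewrite inE; apply: asboolP. Qed.

Lemma coset_perm_imageS (U V : A -> Prop) :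
  Defs.subset V U -> coset_perm_image V \subset coset_perm_image U.
Proof.
by move=> sVU; apply/subsetP => _ /coset_perm_imageP [u /sVU Uu <-]; apply: mem_coset_perm_image.
Qed.

Lemma coset_perm_image_sub (U : A -> Prop) : coset_perm_image U \subset coset_perms.
Proof. by apply/subsetP => _ /coset_perm_imageP [u _ <-]; apply: coset_perm_rep. Qed.

End CosetPerm.

Local Open Scope group_scope.

Section PGroupFrattini.
Variables (gT : finGroupType) (p : nat) (P : {group gT}).
Hypothesis pP : p.-group P.

Lemma mem_Phi_expp x : x \in P -> x ^+ p \in 'Phi(P).
Proof.
move=> Px; rewrite (Phi_joing pP) mem_gen // inE orbC.
by have := Mho_p_elt 1 Px (mem_p_elt pP Px); rewrite expn1 => ->.
Qed.

Lemma mem_Phi_commg x y : x \in P -> y \in P -> [~ x, y] \in 'Phi(P).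
Proof. by move=> Px Py; rewrite (Phi_joing pP) mem_gen // inE mem_commg. Qed.

End PGroupFrattini.

Lemma noncofinal_Frattini_witness (A : Defs.group) p (S : (A -> Prop) -> Prop) N :
  prime p -> (exists U, S U) -> NSp p N -> ~ (exists U, S U /\ Defs.subset U N) ->
  exists U0 (P : A -> Prop), [/\ S U0, is_subgroup P, Defs.subset (PhiP p U0) P &
    forall V, S V -> Defs.subset V U0 -> ~ Defs.subset V P].
Proof.
move=> p_pr S0 [nN [k [r rN]]] notcof.
pose img := coset_perm_image nN rN.
have [U0 [SU0 minU0]] := ex_minimizer (fun U => #|img U|) S0.
pose H := <<img U0>>%G.
have pH : p.-group H.
  apply: (@pgroupS _ _ (coset_perms_group nN rN)); first by rewrite gen_subG coset_perm_image_sub.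
  by rewrite /pgroup card_coset_perms pnatX pnat_id.
have ntH : H :!=: 1.
  apply/negP => /eqP H1; apply: notcof; exists U0; split => // u U0u.
  by apply/(coset_perm1P nN rN)/set1gP; rewrite -H1 mem_gen // mem_coset_perm_image.
pose P x := coset_perm nN rN x \in 'Phi(H).
have sP : is_subgroup P.
  split; first by rewrite /P coset_perm1 group1.
  by split=> [x y | x]; rewrite /P ?coset_permM ?coset_permV; [apply: groupM | rewrite groupV].
exists U0, P; split => //.
  apply: gen_min sP _ => _ [[u [U0u ->]] | [u [v [U0u [U0v ->]]]]]; rewrite /P.
    by rewrite coset_perm_gpow (mem_Phi_expp pH) // mem_gen // mem_coset_perm_image.
  by rewrite coset_perm_gcomm (mem_Phi_commg pH) // mem_gen // mem_coset_perm_image.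
move=> V SV sVU0 sVP; have := Phi_proper ntH; rewrite properE => /andP [_ /negP]; apply.
have imgV : img V = img U0 by apply/eqP; rewrite eqEcard coset_perm_imageS // minU0.
change (<<img U0>> \subset 'Phi(H)); rewrite gen_subG -imgV.
apply/subsetP => _ /coset_perm_imageP [v Vv <-]; exact: sVP.
Qed.

End CosetAction.

Section Chains.
Variable G : group.

Lemma subset_chain (U : nat -> G -> Prop) : (forall n, Defs.subset (U n.+1) (U n)) ->
  forall n m, n <= m -> Defs.subset (U m) (U n).
Proof. by move=> U_decr n m /subnK <-; elim: (m - n) => // k IH x /U_decr /IH. Qed.

Lemma directed_cofinal_chain (S : (G -> Prop) -> Prop) (E : nat -> G -> Prop) U0 :
  directed S -> (forall U, S U -> exists k, E k = U) -> S U0 ->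
  exists Uc : nat -> G -> Prop, [/\ Uc 0 = U0,
    forall n, S (Uc n) /\ Defs.subset (Uc n.+1) (Uc n) &
    forall V, S V -> exists n, Defs.subset (Uc n) V].
Proof.
move=> dirS enumS SU0.
have step n V : S V -> exists W, S W /\ Defs.subset W V /\ (S (E n) -> Defs.subset W (E n)).
  move=> SV; case: (pselect (S (E n))) => [SE | nSE].
    by have [W [SW [sWV sWE]]] := dirS _ _ SV SE; exists W.
  by exists V; split=> //; split=> [x // | /nSE].
have [Uc [Uc0 UcS]] := dependent_choice_nat SU0 step.
exists Uc; split=> // [n | V SV]; first by have [? []] := UcS n.
have [k Ek] := enumS V SV; exists k.+1; rewrite -Ek.
by have [_ [_]] := UcS k; apply; rewrite Ek.
Qed.

Section MittagLeffler.
Variables (U Q : nat -> G -> Prop).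
Hypotheses (U_decr : forall n, Defs.subset (U n.+1) (U n)) (sQ : forall n, is_subgroup (Q n)).
Hypothesis Q_decr : forall n, Defs.subset (Q n.+1) (Q n).
Hypothesis Q_finite_index : forall n,
  exists (F : finType) (R : F -> G), forall u, U n u -> exists j, Q n (u * (R j)^-1).

(* [x] lies in the image of every [U m] in [U n / Q n]. *)
Definition liftable n x := U n x /\ forall m, n <= m -> exists2 v, U m v & Q n (x * v^-1).

Lemma image_stabilizes n : exists M, n <= M /\
  forall m, M <= m -> forall v, U M v -> exists2 v', U m v' & Q n (v * v'^-1).
Proof.
have [F [R RP]] := Q_finite_index n.
pose d m := [set j | `[< exists2 v, U m v & Q n (R j * v^-1) >]].
have d_decr m : d m.+1 \subset d m.
  by apply/subsetP => j; rewrite !inE => /asboolP [v /U_decr Umv Qv]; apply/asboolP; exists v.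
have [M [nM dM]] := finset_chain_stabilizes n d_decr.
exists M; split => // m Mm v UMv.
have [j Qvj] := RP v (subset_chain U_decr nM UMv).
have : j \in d M by rewrite inE; apply/asboolP; exists v; last exact: coset_sym.
move/(subsetP (dM m Mm)); rewrite inE => /asboolP [v' Umv' Qjv'].
by exists v'; last exact: coset_trans Qvj Qjv'.
Qed.

Lemma liftable_eventually n : exists M, n <= M /\ forall x, U M x -> liftable n x.
Proof.
have [M [nM stabM]] := image_stabilizes n.
exists M; split=> // x UMx; split=> [|m nm]; first exact: (subset_chain U_decr nM UMx).
have [Mm | mM] := leqP M m; first exact: stabM.
by exists x; [exact: (subset_chain U_decr (ltnW mM) UMx) | apply: coset_refl].
Qed.

Lemma liftable_step n x : liftable n x -> exists y, liftable n.+1 y /\ Q n (y * x^-1).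
Proof.
case=> _ liftx; have [M [nM liftM]] := liftable_eventually n.+1.
have [v UMv Qxv] := liftx M (ltnW nM).
by exists v; split; [apply: liftM | apply: coset_sym].
Qed.

Lemma coherent_lift : exists M, forall x, U M x -> exists c : nat -> G,
  c 0 = x /\ forall n, U n (c n) /\ forall m, n <= m -> Q n (c m * (c n)^-1).
Proof.
have [M [_ liftM]] := liftable_eventually 0.
exists M => x /liftM lx; have [c [c0 hc]] := dependent_choice_nat lx liftable_step.
exists c; split=> // n; split; first by have [[]] := hc n.
move=> m /subnK <-; elim: (m - n) => [|k IH]; first exact: coset_refl.
rewrite addSn; apply: (coset_trans (sQ n) _ IH).
exact: (subset_chain Q_decr (leq_addl k n) (hc (k + n)).2).
Qed.

End MittagLeffler.
End Chains.

Section Cofinality.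
Variables (G : group) (p : nat) (S : (G -> Prop) -> Prop).

Lemma coherent_chain_family (Uc : nat -> G -> Prop) (c : nat -> G) :
  (forall n, Defs.subset (Uc n.+1) (Uc n)) -> (forall V, S V -> exists n, Defs.subset (Uc n) V) ->
  (forall n, Uc n (c n)) -> (forall n m, n <= m -> PhiP p (Uc n) (c m * (c n)^-1)) ->
  exists f : (G -> Prop) -> G, [/\ forall U, S U -> U (f U),
    forall U V, S U -> S V -> Defs.subset V U -> PhiP p U (f V * (f U)^-1) &
    forall U, S U -> exists n, Defs.subset (Uc n) U /\ f U = c n].
Proof.
move=> Uc_decr Uc_cof Uc_c c_coh.
have idx U : exists n, S U -> Defs.subset (Uc n) U.
  by case: (pselect (S U)) => [/Uc_cof [n] | nSU]; [exists n | exists 0].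
pose nS U := sval (cid (idx U)).
have nSP U : S U -> Defs.subset (Uc (nS U)) U := svalP (cid (idx U)).
exists (fun U => c (nS U)); split=> [U /nSP sU | U V SU SV sVU | U /nSP sU]; last by exists (nS U).
  exact: sU.
have sPhiU : is_subgroup (PhiP p U) := gen_is_subgroup _.
set a := nS V; set b := nS U; pose m := maxn a b.
have ha : PhiP p U (c m * (c a)^-1).
  exact: (PhiP_mono (fun x hx => sVU x (nSP V SV x hx)) (c_coh a m (leq_maxl a b))).
have hb : PhiP p U (c m * (c b)^-1) := PhiP_mono (nSP U SU) (c_coh b m (leq_maxr a b)).
exact: (coset_trans sPhiU (coset_sym sPhiU ha) hb).
Qed.

Lemma restriction_bijective_of_cofinal :
  (forall U, S U -> NSp p U) -> (exists U, S U) -> directed S ->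
  (forall N, NSp p N -> exists U, S U /\ Defs.subset U N) -> restriction_bijective p S.
Proof.
move=> SN [U0 SU0] dirS cofS; split=> [g g' cg cg' gg' N NpN | c cc].
  have [U [SU sUN]] := cofS N NpN; have sN := proj1 (proj1 NpN).
  apply: (coset_trans sN (coset_sym sN (cg N U NpN (SN U SU) sUN))).
  exact: (coset_trans sN (sUN _ (gg' U SU)) (cg' N U NpN (SN U SU) sUN)).
have sel N : exists U, NSp p N -> S U /\ Defs.subset U N.
  by case: (pselect (NSp p N)) => [/cofS [U hU] | nN]; [exists U | exists U0 => /nN].
pose selU N := sval (cid (sel N)).
have selP N : NSp p N -> S (selU N) /\ Defs.subset (selU N) N := svalP (cid (sel N)).
exists (fun N => c (selU N)); split=> [N M NpN NpM sMN | U SU]; last first.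
  by have [SsU sUU] := selP U (SN U SU); apply: cc.
have [[SsN sN] [SsM sM]] := (selP N NpN, selP M NpM); have sgN := proj1 (proj1 NpN).
have [W [SW [sWM sWN]]] := dirS _ _ SsM SsN.
apply: (coset_trans sgN (coset_sym sgN (sMN _ (sM _ (cc _ W SsM SW sWM))))).
exact: (sN _ (cc _ W SsN SW sWN)).
Qed.

End Cofinality.

Lemma lim_H1_zero_cofinal (A : group) (L : finType) (s : L -> A) p (S : (A -> Prop) -> Prop) :
  (forall x, gen (fun y => exists l, y = s l) x) -> prime p -> (forall U, S U -> NSp p U) ->
  (exists U, S U) -> directed S -> lim_H1_zero p S ->
  forall N, NSp p N -> exists U, S U /\ Defs.subset U N.
Proof.
move=> genA p_pr SN S0 dirS limS N NpN; apply: contrapT => notcof.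
have [U0 [P [SU0 sP PhiP_P noVP]]] := CosetAction.noncofinal_Frattini_witness p_pr S0 NpN notcof.
have enumS U : S U -> exists k, subgroup_enum s k = U.
  by move=> /SN [[sU _] [k [r rU]]]; apply: finite_index_subgroup_enum rU.
have [Uc [Uc0 UcS Uc_cof]] := directed_cofinal_chain dirS enumS SU0.
have Uc_decr n : Defs.subset (Uc n.+1) (Uc n) by case: (UcS n).
have [M liftM] := coherent_lift (Q := fun n => PhiP p (Uc n)) Uc_decr
  (fun n => gen_is_subgroup _) (fun n => PhiP_mono (Uc_decr n))
  (fun n => NSp_PhiP_finite_index genA p_pr (SN _ (UcS n).1)).
have [x UcMx xnP] : exists2 x, Uc M x & ~ P x.
  by apply/existsPNP; apply: noVP; [case: (UcS M) | rewrite -Uc0; apply: subset_chain].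
have [c [c0 hc]] := liftM x UcMx.
have [f [fU fcoh fc]] := coherent_chain_family Uc_decr Uc_cof (fun n => (hc n).1)
  (fun n m => (hc n).2 m).
have [n [_ fU0]] := fc U0 SU0.
have Phi_cn : PhiP p U0 (c n) by rewrite -fU0; apply: limS fU fcoh U0 SU0.
have Phi_c0n : PhiP p U0 (c n * (c 0)^-1) by rewrite -Uc0; apply: (hc 0).2.
apply: xnP; rewrite -c0 -(gmulgKV (c 0) (c n)).
exact: (subgroupM sP (PhiP_P _ (coset_sym (gen_is_subgroup _) Phi_c0n)) (PhiP_P _ Phi_cn)).
Qed.

Theorem lemma3p4 (A : group) (p : nat) (S : (A -> Prop) -> Prop) :
  orientable_surface_group A ->
  prime p ->
  (forall U, S U -> NSp p U) ->
  (exists U, S U) ->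
  directed S ->
  lim_H1_zero p S ->
  restriction_bijective p S.
Proof.
move=> /surface_group_finitely_generated [L [s genA]] p_pr SN S0 dirS limS.
apply: restriction_bijective_of_cofinal => //.
exact: lim_H1_zero_cofinal genA p_pr SN S0 dirS limS.
Qed.
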